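(* (1) The map $\rho$ (resp. $\eta$, $\tau$) equals the composition of the maps $\rho_a^b$ (resp. $\eta_a^b$, $\tau_a^b$) taken along any linear extension of the coordinatewise partial order on $[m]\times[n]$ (i.e. for any ordering $(a_1,b_1),\dots,(a_{mn},b_{mn})$ of $[m]\times[n]$ in which $(a,b)$ precedes $(a',b')$ whenever $a\le a'$, $b\le b'$, $(a,b)\ne(a',b')$, we have $\rho=\rho_{a_{mn}}^{b_{mn}}\circ\dots\circ\rho_{a_1}^{b_1}$, and similarly for $\eta,\tau$). (2) $\rho=\tau\circ\eta$.
   Context: For $\mathbf{x}=(x_a^b)\in\mathrm{Mat}_{m\times n}(\mathbb{C}^* )$ define $\mathrm{gMax}_a^b(\mathbf{x})=\frac{x_a^{b-1}x_{a-1}^b}{x_a^{b-1}+x_{a-1}^b}$ if $a,b>1$; $x_1^{b-1}$ if $a=1<b$; $x_{a-1}^1$ if $b=1<a$; $1$ if $a=b=1$. Define $\mathrm{gMin}_a^b(\mathbf{x})=x_{a+1}^b+x_a^{b+1}$ if $a<m,b<n$; $x_m^{b+1}$ if $a=m,b<n$; $x_{a+1}^n$ if $a<m,b=n$; $1$ if $a=m,b=n$. The rational maps $\eta_a^b,T_a^b$ change only the entry $x_a^b$: $\eta_a^b:x_a^b\mapsto x_a^b\,\mathrm{gMax}_a^b(\mathbf{x})$, $T_a^b:x_a^b\mapsto\frac{1}{x_a^b}\mathrm{gMax}_a^b(\mathbf{x})\mathrm{gMin}_a^b(\mathbf{x})$. Let $\tau_a^b=T_1^{b-a+1}\circ\dots\circ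 T_{a-2}^{b-2}\circ T_{a-1}^{b-1}$ if $a\le b$ and $\tau_a^b=T_{a-b+1}^1\circ\dots\circ T_{a-2}^{b-2}\circ T_{a-1}^{b-1}$ if $a\ge b$ (the identity if $a=1$ or $b=1$), and $\rho_a^b=\tau_a^b\circ\eta_a^b$. Define $\rho=(\rho_m^n\circ\dots\circ\rho_m^1)\circ\dots\circ(\rho_1^n\circ\dots\circ\rho_1^1)$, and $\eta,\tau$ the same way with $\rho_a^b$ replaced by $\eta_a^b$, resp. $\tau_a^b$. *)

(* Rational maps on Mat_{m x n} are modelled as maps on
   matrices over an arbitrary field (total inverse); equality of rational
   maps is stated by evaluating at the generic matrix over the field of
   rational functions C(x_a^b). *)
From HB Require Import structures.
From mathcomp Require Import all_boot all_order all_algebra.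
From mathcomp Require Import algC.
From mathcomp Require Import fraction.
From mathcomp Require Import mpoly.
Set Implicit Arguments. Unset Strict Implicit. Unset Printing Implicit Defensive.
Import GRing.Theory.
Local Open Scope ring_scope.

Section Maps.
Variables (K : fieldType) (m n : nat).
Notation M := 'M[K]_(m, n).

(* entry x_a^b with 1-based indices a in [1,m], b in [1,n] (0 outside) *)
Definition ent (x : M) (a b : nat) : K :=
  match @insub nat (fun i => (i < m)%N) (ordinal m) a.-1,
        @insub nat (fun j => (j < n)%N) (ordinal n) b.-1 with
  | Some i, Some j => x i j
  | _, _ => 0
  end.

Definition upd (x : M) (a b : nat) (v : K) : M :=
  \matrix_(i < m, j < n) if ((i.+1 == a) && (j.+1 == b))%N then v else x i j.

Definition gMax (x : M) (a b : nat) : K :=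
  if ((1 < a) && (1 < b))%N then
    ent x a (b.-1) * ent x a.-1 b / (ent x a (b.-1) + ent x a.-1 b)
  else if ((a == 1) && (1 < b))%N then ent x 1 b.-1
  else if ((b == 1) && (1 < a))%N then ent x a.-1 1
  else 1.

Definition gMin (x : M) (a b : nat) : K :=
  if ((a < m) && (b < n))%N then ent x a.+1 b + ent x a b.+1
  else if ((a == m) && (b < n))%N then ent x m b.+1
  else if ((a < m) && (b == n))%N then ent x a.+1 n
  else 1.

Definition eta_ab (a b : nat) (x : M) : M :=
  upd x a b (ent x a b * gMax x a b).

Definition T_ab (a b : nat) (x : M) : M :=
  upd x a b ((ent x a b)^-1 * gMax x a b * gMin x a b).

(* tau_a^b = T_{a-k}^{b-k} o ... o T_{a-1}^{b-1}, k = min(a,b) - 1;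
   T_{a-1}^{b-1} is applied first. Identity if a = 1 or b = 1. *)
Definition tau_ab (a b : nat) (x : M) : M :=
  foldl (fun y i => T_ab (a - i) (b - i) y) x (iota 1 (minn a b).-1).

Definition rho_ab (a b : nat) (x : M) : M := tau_ab a b (eta_ab a b x).

Definition compose_along (f : nat -> nat -> M -> M) (s : seq (nat * nat)) (x : M) : M :=
  foldl (fun y p => f p.1 p.2 y) x s.

Definition rowmajor : seq (nat * nat) :=
  [seq (a, b) | a <- iota 1 m, b <- iota 1 n].

Definition rho_map := compose_along rho_ab rowmajor.
Definition eta_map := compose_along eta_ab rowmajor.
Definition tau_map := compose_along tau_ab rowmajor.

End Maps.

Definition linear_extension (m n : nat) (s : seq (nat * nat)) : Prop :=
  perm_eq s (rowmajor m n) /\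
  forall i j, (i < size s)%N -> (j < size s)%N ->
    let p := nth (0, 0)%N s i in let q := nth (0, 0)%N s j in
    (p.1 <= q.1)%N -> (p.2 <= q.2)%N -> p != q -> (i < j)%N.

Definition ratfun (m n : nat) := {fraction {mpoly algC[m * n]}}.

Definition generic_matrix (m n : nat) : 'M[ratfun m n]_(m, n) :=
  \matrix_(i < m, j < n) (@FracField.tofrac {mpoly algC[m * n]} 'X_(mxvec_index i j)).

From HB Require Import structures.
From mathcomp Require Import all_boot all_order all_algebra.
From mathcomp Require Import algC fraction mpoly.
From mathcomp Require Import zify.
Set Implicit Arguments. Unset Strict Implicit. Unset Printing Implicit Defensive.

(* Each of eta_a^b and T_a^b rewrites only the entry (a, b), with a new value that
   depends only on the entries at l1-distance at most 1 from (a, b); two such maps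
   at cells at distance at least 2 therefore commute.  rho_a^b, eta_a^b and tau_a^b
   are composites of such maps at cells (a - i, b - i) of the diagonal ending at
   (a, b), and the diagonals ending at two incomparable cells are at distance at
   least 2.  Two linear extensions of the product order differ by moving cells past
   incomparable ones, which gives (1).  For (2), the maps T making up tau_a^b sit
   strictly above-left of (a, b), hence far from every cell (c, d) not below
   (a, b), in particular from every later cell in row-major order; so all the etas
   can be moved in front of all the taus. *)

Section FoldCommute.
Variables (T : eqType) (X : Type).

Lemma foldl_commute (F : X -> T -> X) (f : X -> X) s x :
  {in s, forall p y, f (F y p) = F (f y) p} -> f (foldl F x s) = foldl F (f x) s.
Proof.
elim: s x => //= p s IH x fF.
by rewrite IH ?fF ?mem_head // => q sq; apply: fF; rewrite inE sq orbT.
Qed.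

Lemma foldl_perm_pairwise (r : rel T) (F : X -> T -> X) s t x :
  perm_eq s t -> pairwise r s -> pairwise r t ->
  {in s &, forall p q, r p q -> r q p -> forall y, F (F y p) q = F (F y q) p} ->
  foldl F x s = foldl F x t.
Proof.
elim: t s x => [|q t IH] s x; first by move/perm_nilP->.
move=> st rs rt Fpq; have sq : q \in s by rewrite (perm_mem st) mem_head.
case/splitPr: sq st rs Fpq => s1 s2 st rs Fpq.
have sub12 : subseq (s1 ++ s2) (s1 ++ q :: s2).
  by rewrite cat_subseq ?subseq_cons.
have st' : perm_eq (s1 ++ s2) t.
  by rewrite -(perm_cons q) -(perm_catCA s1 [:: q] s2).
move: rt => /= /andP[rqt rt].
rewrite foldl_cat /= (foldl_commute (f := F^~ q)) => [|p s1p y].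
  rewrite -foldl_cat; apply: IH rt (sub_in2 (mem_subseq sub12) Fpq) => //.
  exact: subseq_pairwise sub12 rs.
have rpq : r p q.
  by move: rs; rewrite pairwise_cat => /and3P[/allrelP/(_ p q s1p (mem_head _ _))].
have rqp : r q p by apply: (allP rqt); rewrite -(perm_mem st') mem_cat s1p.
by apply: Fpq; rewrite ?mem_cat ?s1p ?mem_head ?orbT.
Qed.

Lemma foldl_interleave (r : rel T) (F G : X -> T -> X) s x :
  pairwise r s ->
  {in s &, forall p q, r p q -> forall y, G (F y q) p = F (G y p) q} ->
  foldl (fun y p => G (F y p) p) x s = foldl G (foldl F x s) s.
Proof.
elim: s x => //= p s IH x /andP[rps rs] GF.
rewrite IH //; last by apply: sub_in2 GF => q sq; rewrite inE sq orbT.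
congr foldl; symmetry; apply: (foldl_commute (f := G^~ p)) => q sq y.
by apply: GF; rewrite ?inE ?sq ?eqxx ?orbT //; apply: (allP rps).
Qed.

End FoldCommute.

Definition cell_le (p q : nat * nat) : bool := (p.1 <= q.1) && (p.2 <= q.2).

Lemma iota_pairwise k l : pairwise ltn (iota k l).
Proof. by rewrite -sorted_pairwise ?iota_ltn_sorted //; apply: ltn_trans. Qed.

Lemma rowmajor_pairwise m n : pairwise [rel p q | ~~ cell_le q p] (rowmajor m n).
Proof.
rewrite /rowmajor; elim: (iota 1 m) (iota_pairwise 1 m) => //= a s IH /andP[as_ ps].
rewrite pairwise_cat IH // andbT; apply/andP; split.
- apply/allrelP => _ _ /mapP[b _ ->] /allpairsP[[c d] /= [cs _ ->]].
  by rewrite /cell_le /= leqNgt (allP as_ c cs : a < c).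
- rewrite pairwise_map; apply: sub_pairwise (iota_pairwise 1 n) => b d /=.
  by rewrite /cell_le /= leqnn -ltnNge.
Qed.

Lemma rowmajor_gt0 m n p : p \in rowmajor m n -> 0 < p.1 /\ 0 < p.2.
Proof.
by case/allpairsP => -[a b] /= [+ + ->]; rewrite !mem_iota => /andP[-> _] /andP[-> _].
Qed.

Lemma linear_extension_pairwise m n s :
  linear_extension m n s -> pairwise [rel p q | ~~ cell_le q p] s.
Proof.
case=> perm_s lin; have us : uniq s.
  rewrite (perm_uniq perm_s); apply: pairwise_uniq (rowmajor_pairwise m n).
  by move=> p; rewrite /= /cell_le !leqnn.
apply/(pairwiseP (0, 0)) => i j si sj ij /=; apply/negP => le_ji.
have [eq_ji|ne_ji] := eqVneq (nth (0, 0) s j) (nth (0, 0) s i).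
  by move/eqP: eq_ji; rewrite nth_uniq // => /eqP ji; rewrite ji ltnn in ij.
by case/andP: le_ji => le1 le2; have := lin j i sj si le1 le2 ne_ji; lia.
Qed.

Section Locality.
Variables (K : fieldType) (m n : nat).
Notation M := 'M[K]_(m, n).

Definition l1dist (c d : nat * nat) : nat :=
  (c.1 - d.1) + (d.1 - c.1) + (c.2 - d.2) + (d.2 - c.2).

Lemma l1distC c d : l1dist c d = l1dist d c.
Proof. rewrite /l1dist; lia. Qed.

Definition agree_near (c : nat * nat) (x y : M) : Prop :=
  forall (i : 'I_m) (j : 'I_n), l1dist (i.+1, j.+1) c <= 1 -> x i j = y i j.

Definition local_at (c : nat * nat) (f : M -> M) : Prop :=
  exists2 v : M -> K, forall x, f x = upd x c.1 c.2 (v x)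
    & forall x y, agree_near c x y -> v x = v y.

Lemma ent_agree_near c x y a b : agree_near c x y ->
  0 < a -> 0 < b -> l1dist (a, b) c <= 1 -> ent x a b = ent y a b.
Proof.
move=> xy a0 b0 abc; rewrite /ent.
case: insubP => [i _ ia|//]; case: insubP => [j _ jb|//].
by apply: xy; rewrite ia jb !prednK.
Qed.

Lemma gMax_agree_near x y a b : agree_near (a, b) x y ->
  0 < a -> 0 < b -> gMax x a b = gMax y a b.
Proof.
move=> xy a0 b0; have E p q := @ent_agree_near _ x y p q xy.
rewrite /gMax /l1dist /= in E *.
case: ifP => [/andP[a1 b1]|_]; first by rewrite (E a b.-1) ?(E a.-1 b) //; lia.
case: ifP => [/andP[/eqP a1 b1]|_]; first by rewrite (E 1 b.-1) //; lia.
by case: ifP => [/andP[/eqP b1 a1]|_] //; rewrite (E a.-1 1) //; lia.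
Qed.

Lemma gMin_agree_near x y a b : agree_near (a, b) x y ->
  0 < a -> 0 < b -> gMin x a b = gMin y a b.
Proof.
move=> xy a0 b0; have E p q := @ent_agree_near _ x y p q xy.
rewrite /gMin /l1dist /= in E *.
case: ifP => [/andP[am bn]|_]; first by rewrite (E a.+1 b) ?(E a b.+1) //; lia.
case: ifP => [/andP[/eqP am bn]|_]; first by rewrite (E m b.+1) //; lia.
by case: ifP => [/andP[am /eqP bn]|_] //; rewrite (E a.+1 n) //; lia.
Qed.

Lemma local_at_eta a b : 0 < a -> 0 < b -> local_at (a, b) (eta_ab a b).
Proof.
move=> a0 b0; exists (fun x => ent x a b * gMax x a b)%R => // x y xy.
by rewrite (gMax_agree_near xy) // (ent_agree_near xy) // /l1dist /= !subnn.
Qed.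

Lemma local_at_T a b : 0 < a -> 0 < b -> local_at (a, b) (T_ab a b).
Proof.
move=> a0 b0.
exists (fun x => (ent x a b)^-1 * gMax x a b * gMin x a b)%R => // x y xy.
rewrite (gMax_agree_near xy) // (gMin_agree_near xy) //.
by rewrite (ent_agree_near xy) // /l1dist /= !subnn.
Qed.

Lemma agree_near_upd c d (x : M) v : 1 < l1dist c d -> agree_near c (upd x d.1 d.2 v) x.
Proof.
move=> cd i j ic; rewrite mxE; case: ifP => // /andP[/eqP id /eqP jd].
by move: ic cd; rewrite /l1dist -id -jd /=; lia.
Qed.

Lemma updC (x : M) a b c d v w : (a, b) != (c, d) ->
  upd (upd x a b v) c d w = upd (upd x c d w) a b v.
Proof.
move=> ne; apply/matrixP => i j; rewrite !mxE.
case: ifP => [/andP[/eqP ic /eqP jd]|//]; case: ifP => [/andP[/eqP ia /eqP jb]|//].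
by move: ne; rewrite -ia -jb -ic -jd eqxx.
Qed.

Lemma local_at_commute c d f g : local_at c f -> local_at d g ->
  1 < l1dist c d -> f \o g =1 g \o f.
Proof.
move=> [v fv vc] [w gw wd] cd x /=.
rewrite fv gw (fv x) (gw (upd _ _ _ _)).
rewrite (vc _ x); last exact: agree_near_upd.
rewrite (wd _ x); last by apply: agree_near_upd; rewrite l1distC.
apply: updC; case: c d {fv vc gw wd} cd => [a b] [c e] /=.
by apply: contraTneq => -[-> ->]; rewrite /l1dist !subnn.
Qed.

Inductive local_composite (P : pred (nat * nat)) : (M -> M) -> Prop :=
  | local_composite_id : local_composite P id
  | local_composite_comp f g c :
      local_composite P f -> c \in P -> local_at c g -> local_composite P (f \o g).

Lemma local_composite_sub (P Q : pred (nat * nat)) f :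
  {subset P <= Q} -> local_composite P f -> local_composite Q f.
Proof.
move=> PQ; elim=> [|g h c _ IH Pc hc]; first exact: local_composite_id.
exact: local_composite_comp IH (PQ c Pc) hc.
Qed.

Lemma local_at_composite_commute (P : pred (nat * nat)) c f g :
  local_at c f -> local_composite P g -> (forall d, d \in P -> 1 < l1dist c d) ->
  f \o g =1 g \o f.
Proof.
move=> fc; elim=> [|g1 h d _ IH Pd hd] far x //=.
have /= -> := IH far (h x); congr g1; exact: (local_at_commute fc hd (far d Pd) x).
Qed.

Lemma local_composite_commute (P Q : pred (nat * nat)) f g :
  local_composite P f -> local_composite Q g ->
  (forall c d, c \in P -> d \in Q -> 1 < l1dist c d) -> f \o g =1 g \o f.
Proof.
move=> + gQ; elim=> [|f1 h c _ IH Pc hc] far x //=.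
have /= <- := IH far (h x); congr f1.
by apply: local_at_composite_commute hc gQ _ x => d Qd; apply: far.
Qed.

Definition diag_upto (a b : nat) : pred (nat * nat) :=
  [pred c | (c.1 + b == c.2 + a) && (c.1 <= a)].

Lemma diag_upto_far a b c d p q : a < c -> d < b ->
  p \in diag_upto a b -> q \in diag_upto c d -> 1 < l1dist p q.
Proof. rewrite !inE /l1dist; lia. Qed.

Lemma diag_upto_predn a b : 0 < a -> 0 < b ->
  {subset diag_upto a.-1 b.-1 <= diag_upto a b}.
Proof. move=> a0 b0 p; rewrite !inE; lia. Qed.

Lemma diag_upto_predn_far a b c d p : 0 < a -> 0 < b ->
  ~~ cell_le (c, d) (a, b) -> p \in diag_upto a.-1 b.-1 -> 1 < l1dist p (c, d).
Proof. rewrite inE /cell_le /l1dist /=; lia. Qed.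

Lemma eta_composite a b : 0 < a -> 0 < b ->
  local_composite (diag_upto a b) (eta_ab a b).
Proof.
move=> a0 b0; apply: local_composite_comp (local_composite_id _) _ (local_at_eta a0 b0).
by rewrite inE /=; lia.
Qed.

Lemma tau_composite a b : local_composite (diag_upto a.-1 b.-1) (tau_ab a b).
Proof.
have: all (fun i => 0 < i < minn a b) (iota 1 (minn a b).-1).
  by apply/allP => i; rewrite mem_iota; lia.
rewrite /tau_ab; elim: (iota _ _) => [_|i s IH] /=; first exact: local_composite_id.
case/andP => i_range /IH s_comp; apply: local_composite_comp s_comp _ (local_at_T _ _).
all: rewrite ?inE /=; lia.
Qed.

Lemma rho_composite a b : 0 < a -> 0 < b ->
  local_composite (diag_upto a b) (rho_ab a b).
Proof.
move=> a0 b0; apply: local_composite_comp _ _ (local_at_eta a0 b0).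
  exact: local_composite_sub (diag_upto_predn a0 b0) (tau_composite a b).
by rewrite inE /=; lia.
Qed.

Lemma compose_along_linear_extension (F : nat -> nat -> M -> M) s (x : M) :
  (forall a b, 0 < a -> 0 < b -> local_composite (diag_upto a b) (F a b)) ->
  linear_extension m n s -> compose_along F s x = compose_along F (rowmajor m n) x.
Proof.
move=> F_comp ext; have [perm_s _] := ext.
apply: (foldl_perm_pairwise (F := fun y p => F p.1 p.2 y) _ perm_s
  (linear_extension_pairwise ext) (rowmajor_pairwise m n)).
move=> [a b] [c d]; rewrite !(perm_mem perm_s).
move=> /rowmajor_gt0[a0 b0] /rowmajor_gt0[c0 d0]; rewrite /= /cell_le /= => cd_ab ab_cd y.
have [ac|ca] := ltnP a c.
  symmetry; apply: (local_composite_commute (F_comp _ _ a0 b0) (F_comp _ _ c0 d0)).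
  by move=> p q; apply: diag_upto_far => /=; lia.
apply: (local_composite_commute (F_comp _ _ c0 d0) (F_comp _ _ a0 b0)).
by move=> p q; apply: diag_upto_far => /=; lia.
Qed.

Lemma rho_map_tau_eta (x : M) : rho_map x = tau_map (eta_map x).
Proof.
apply: (foldl_interleave (F := fun y p => eta_ab p.1 p.2 y)
  (G := fun y p => tau_ab p.1 p.2 y) _ (rowmajor_pairwise m n)).
move=> [a b] [c d] /rowmajor_gt0[a0 b0] /rowmajor_gt0[c0 d0] /= cd_ab y; symmetry.
apply: (local_at_composite_commute (local_at_eta c0 d0) (tau_composite a b)) => p.
by rewrite l1distC; exact: diag_upto_predn_far.
Qed.

End Locality.

Theorem lemma4p4 (m n : nat) :
  (forall s : seq (nat * nat), linear_extension m n s ->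
     [/\ compose_along (@rho_ab _ m n) s (generic_matrix m n)
           = rho_map (generic_matrix m n),
         compose_along (@eta_ab _ m n) s (generic_matrix m n)
           = eta_map (generic_matrix m n)
       & compose_along (@tau_ab _ m n) s (generic_matrix m n)
           = tau_map (generic_matrix m n)]) /\
  rho_map (generic_matrix m n)
    = tau_map (eta_map (generic_matrix m n)).
Proof.
split; last exact: rho_map_tau_eta.
move=> s ext; split; apply: compose_along_linear_extension ext => a b a0 b0.
- exact: rho_composite.
- exact: eta_composite.
- exact: local_composite_sub (diag_upto_predn a0 b0) (tau_composite _ _ _ a b).
Qed.
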